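(* The entanglement of the domino $D_{14}$ is at least $4$.
   Context: The domino $D_n$ is the graph with vertices $v_i,w_i$ ($i=0,\dots,n$) and edges $v_iv_{i+1},w_iw_{i+1}$ ($i=0,\dots,n-1$) and $v_iw_i$ ($i=0,\dots,n$). Entanglement: in the game $\mathrm{Ent}(G,k)$ Thief plays against $k$ cops on the undirected graph $G$. Initially no cop is placed and Thief picks a vertex. Each round, Cops may do nothing, place a new cop (at most $k$ in total) on Thief's current vertex, or move a placed cop to Thief's current vertex; then Thief must move along an edge to an adjacent vertex not occupied by a cop, and is caught (Cops win) if he cannot. Infinite plays are won by Thief. $\mathrm{Ent}(G)$ is the least $k$ for which Cops have a winning strategy. *)

From mathcomp Require Import all_boot.
Set Implicit Arguments. Unset Strict Implicit. Unset Printing Implicit Defensive.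

(* The domino D_n: vertices (i, false) = v_i and (i, true) = w_i, i = 0..n. *)
Definition domino (n : nat) : rel ('I_n.+1 * bool) :=
  fun x y =>
    ((x.2 == y.2) && (((val x.1).+1 == val y.1) || ((val y.1).+1 == val x.1)))
    || ((val x.1 == val y.1) && (x.2 != y.2)).

Definition cop_move (T : finType) (k : nat) (C : {set T}) (v : T) (C' : {set T})
  : Prop :=
  C' = C \/ (#|C| < k /\ C' = v |: C) \/ (exists2 u, u \in C & C' = v |: (C :\ u)).

(* Thief is caught when no neighbour of v outside C' exists (the universal
   premise is then vacuous). *)
Inductive cops_win (T : finType) (e : rel T) (k : nat) : {set T} -> T -> Prop :=
| CopsWin (C : {set T}) (v : T) (C' : {set T}) :
    cop_move k C v C' ->
    (forall w, e v w -> w \notin C' -> cops_win e k C' w) ->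
    cops_win e k C v.

Definition Ent_cops_win (T : finType) (e : rel T) (k : nat) : Prop :=
  forall v : T, cops_win e k set0 v.

From mathcomp Require Import all_boot.

Set Implicit Arguments. Unset Strict Implicit. Unset Printing Implicit Defensive.

(* Thief wins as soon as he has an invariant: a set of positions from which,
   whatever the cops do, he can step to a free neighbour and be in the set
   again.  Three cops on D_14 only win from positions containing a trap: the
   thief surrounded, or one of a few small configurations near an end of the
   domino.  From every other position with at most three cops Thief escapes
   to another such position; this is a finite check, done by computation over
   all cop sets of size at most 3. *)

Section EntanglementGame.

Variables (T : finType) (e : rel T).

Lemma cop_move_leq k k' (C C' : {set T}) v :
  k <= k' -> cop_move k C v C' -> cop_move k' C v C'.
Proof.
move=> le_kk' [->|[[lt_Ck ->]|[u uC ->]]]; first by left.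
  by right; left; split=> //; apply: leq_trans le_kk'.
by right; right; exists u.
Qed.

Lemma cops_win_leq k k' (C : {set T}) v : k <= k' -> cops_win e k C v -> cops_win e k' C v.
Proof.
move=> le_kk'; elim=> {}C {}v C' move _ IH.
exact: CopsWin (cop_move_leq le_kk' move) IH.
Qed.

Lemma card_cop_move k (C C' : {set T}) v : cop_move k C v C' -> #|C| <= k -> #|C'| <= k.
Proof.
case=> [->|[[lt_Ck ->] _|[u uC ->] le_Ck]] //; rewrite cardsU1.
  by apply: leq_trans lt_Ck; rewrite -add1n leq_add2r leq_b1.
rewrite (cardsD1 u C) uC in le_Ck.
by apply: leq_trans le_Ck; rewrite leq_add2r leq_b1.
Qed.

Definition thief_invariant k (S : {set T} -> T -> Prop) :=
  forall C v C', S C v -> cop_move k C v C' ->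
  exists w, [/\ e v w, w \notin C' & S C' w].

Lemma thief_invariant_cops_lose k S (C : {set T}) v :
  thief_invariant k S -> S C v -> ~ cops_win e k C v.
Proof.
move=> inv SCv win; elim: win SCv => {}C {}v C' move _ IH SCv.
have [w [vw wC' SC'w]] := inv _ _ _ SCv move.
exact: IH vw wC' SC'w.
Qed.

End EntanglementGame.

(* For the finite check, cop sets are represented by duplicate-free lists. *)

Fixpoint subseqs_le (T : Type) (n : nat) (s : seq T) : seq (seq T) :=
  if s is x :: s' then
    subseqs_le n s' ++ (if n is n'.+1 then map (cons x) (subseqs_le n' s') else [::])
  else [:: [::]].

Lemma mem_subseqs_le (T : eqType) n (s t : seq T) :
  subseq t s -> size t <= n -> t \in subseqs_le n s.
Proof.
elim: s n t => [|x s IH] n t /=; first by move=> /eqP ->.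
rewrite mem_cat; case: t => [|y t] /= sub_ts size_t.
  by rewrite IH ?sub0seq.
case: eqP sub_ts => [-> sub_ts|_ sub_ts]; last by rewrite IH.
by case: n size_t => // n size_t; rewrite map_f ?orbT ?IH.
Qed.

Definition cop_moves (T : eqType) (k : nat) (s : seq T) (v : T) : seq (seq T) :=
  [:: s & (if size s < k then [:: v :: s] else [::]) ++ [seq v :: rem u s | u <- s]].

Lemma cop_moves_complete (T : finType) k (C C' : {set T}) (s : seq T) v :
  uniq s -> s =i C -> cop_move k C v C' ->
  exists2 s', s' \in cop_moves k s v & s' =i C'.
Proof.
move=> uniq_s sC [->|[[lt_Ck ->]|[u uC ->]]]; first by exists s; rewrite ?mem_head.
- exists (v :: s) => [|y]; last by rewrite in_cons in_setU1 sC.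
  have size_s : size s = #|C| by rewrite -(eq_card sC); apply/esym/card_uniqP.
  by rewrite inE mem_cat size_s lt_Ck mem_head orbT.
- exists (v :: rem u s) => [|y].
    by rewrite inE mem_cat map_f ?orbT ?sC.
  by rewrite in_cons in_setU1 in_setD1 (mem_rem_uniq _ uniq_s) inE sC.
Qed.

Section Domino.

Variable n : nat.

Local Notation V := ('I_n.+1 * bool)%type.

(* Unlike [inord], this construction reduces under [vm_compute]. *)
Definition column (i : nat) : 'I_n.+1 := Ordinal (ltn_pmod i (ltn0Sn n)).

Definition v_ (i : nat) : V := (column i, false).
Definition w_ (i : nat) : V := (column i, true).

Definition domino_vertices : seq V :=
  [seq (column i, b) | i <- iota 0 n.+1, b <- [:: false; true]].

Lemma mem_domino_vertices (x : V) : x \in domino_vertices.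
Proof.
case: x => i b; have val_i : column i = i by apply: val_inj; rewrite /= modn_small.
by apply/allpairsP; exists (val i, b); split; rewrite ?mem_iota /= ?val_i ?ltn_ord //; case: b.
Qed.

Lemma uniq_domino_vertices : uniq domino_vertices.
Proof.
apply: allpairs_uniq; rewrite ?iota_uniq // => -[i1 b1] -[i2 b2].
move=> /allpairsP [[j1 c1] [i1_in _ [-> ->]]] /allpairsP [[j2 c2] [i2_in _ [-> ->]]].
move: i1_in i2_in; rewrite !mem_iota /= => lt_j1 lt_j2 [eq_j ->].
by move: eq_j; rewrite !modn_small // => ->.
Qed.

Definition domino_nbrs (x : V) : seq V := [seq y <- domino_vertices | domino x y].

Definition swap_rows (x : V) : V := (x.1, ~~ x.2).
Definition mirror (x : V) : V := (rev_ord x.1, x.2).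

Definition set_rep (C : {set V}) : seq V := [seq x <- domino_vertices | x \in C].

Lemma set_repE C : set_rep C =i C.
Proof. by move=> x; rewrite mem_filter mem_domino_vertices andbT. Qed.

Lemma uniq_set_rep C : uniq (set_rep C).
Proof. exact/filter_uniq/uniq_domino_vertices. Qed.

Lemma size_set_rep C : size (set_rep C) = #|C|.
Proof. by rewrite -(eq_card (set_repE C)); apply/esym/card_uniqP/uniq_set_rep. Qed.

Lemma set_rep0 : set_rep set0 = [::].
Proof. by rewrite /set_rep (eq_filter (in_set0 (T := V))) filter_pred0. Qed.

End Domino.

Arguments v_ {n} i.
Arguments w_ {n} i.
Arguments swap_rows {n} x.
Arguments mirror {n} x.

Local Notation V := ('I_15 * bool)%type.

(* Up to [swap_rows] and [mirror], the minimal positions other than the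
   surrounded ones from which three cops win on D_14; they were found by
   computing the Cops' attractor, which is upward closed in the cop set. *)
Definition end_traps : seq (V * seq V) :=
  [:: (v_ 0, [:: v_ 1; w_ 1]); (v_ 0, [:: v_ 1; w_ 2]); (v_ 0, [:: w_ 1; v_ 2]);
      (v_ 0, [:: v_ 2; w_ 2]); (v_ 0, [:: v_ 2; w_ 3]); (v_ 0, [:: w_ 2; v_ 3]);
      (v_ 1, [:: w_ 1; v_ 2]); (v_ 1, [:: v_ 2; w_ 2]);
      (v_ 1, [:: v_ 2; w_ 3]); (v_ 1, [:: w_ 2; v_ 3]);
      (v_ 2, [:: v_ 1; v_ 3; w_ 4]); (v_ 2, [:: w_ 2; v_ 3]);
      (v_ 2, [:: v_ 3; w_ 3]); (v_ 2, [:: w_ 3; v_ 4]);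
      (v_ 3, [:: w_ 3; v_ 4])].

Definition traps : seq (V * seq V) :=
  [seq (x, domino_nbrs x) | x <- domino_vertices 14] ++
  [seq (f t.1, map f t.2) | f <- [:: id; swap_rows; mirror; swap_rows \o mirror],
                            t <- end_traps].

Definition traps_at (x : V) : seq (seq V) := [seq t.2 | t <- traps & t.1 == x].

Definition safe_wrt (P : seq (seq V)) (s : seq V) (x : V) : bool :=
  (x \notin s) && all (fun p => ~~ all (mem s) p) P.

Lemma eq_safe_wrt P s1 s2 x : s1 =i s2 -> safe_wrt P s1 x = safe_wrt P s2 x.
Proof.
move=> s12; rewrite /safe_wrt s12; congr (_ && _).
by apply: eq_all => p; rewrite (eq_all s12).
Qed.

Definition safe (s : seq V) (x : V) : bool := safe_wrt (traps_at x) s x.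

(* The [let]s make [vm_compute] look up the traps once per thief vertex. *)
Definition safe_closed : bool :=
  let cop_sets := subseqs_le 3 (domino_vertices 14) in
  all (fun x =>
    let Px := traps_at x in
    let escapes := [seq (y, traps_at y) | y <- domino_nbrs x] in
    all (fun s => safe_wrt Px s x ==>
      all (fun s' => has (fun yP => safe_wrt yP.2 s' yP.1) escapes) (cop_moves 3 s x))
      cop_sets)
    (domino_vertices 14).

Lemma safe_closedT : safe_closed.
Proof. by vm_compute. Qed.

Lemma safe_escape s s' x :
  s \in subseqs_le 3 (domino_vertices 14) -> safe s x -> s' \in cop_moves 3 s x ->
  exists2 y, domino x y & safe s' y.
Proof.
move=> s_small safe_x s'_move; move: safe_closedT.
move=> /allP /(_ x (mem_domino_vertices x)) /allP /(_ s s_small) /implyP /(_ safe_x).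
move=> /allP /(_ s' s'_move) /hasP [_ /mapP [y y_nbr ->] safe_y].
by exists y; [move: y_nbr; rewrite mem_filter => /andP [] | exact: safe_y].
Qed.

Definition thief_safe (C : {set V}) (x : V) : Prop :=
  #|C| <= 3 /\ safe (set_rep C) x.

Lemma thief_safe_invariant : thief_invariant (@domino 14) 3 thief_safe.
Proof.
move=> C x C' [le_C3 safe_x] move.
have [s' s'_move s'C'] := cop_moves_complete (uniq_set_rep C) (@set_repE 14 C) move.
have C_small : set_rep C \in subseqs_le 3 (domino_vertices 14).
  by rewrite mem_subseqs_le ?filter_subseq ?size_set_rep.
have [y xy safe_y] := safe_escape C_small safe_x s'_move.
have s'_rep : s' =i set_rep C' by move=> z; rewrite s'C' set_repE.
exists y; split; [exact: xy | | split; [exact: card_cop_move move le_C3 | ]].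
  by rewrite -s'C'; case/andP: safe_y.
by rewrite /safe -(eq_safe_wrt _ _ s'_rep); exact: safe_y.
Qed.

Theorem mainTheorem13 : forall k : nat, Ent_cops_win (@domino 14) k -> 4 <= k.
Proof.
move=> k win; rewrite leqNgt ltnS; apply/negP => le_k3.
have start : thief_safe set0 (v_ 0) by rewrite /thief_safe cards0 set_rep0; vm_compute.
exact: thief_invariant_cops_lose thief_safe_invariant start (cops_win_leq le_k3 (win _)).
Qed.
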